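(* Let $0<\alpha\leq 1/2$. Then the equation $$\cos(2\pi\alpha) =\cos(2\pi\sqrt{\lambda}) - \frac{1-\sqrt{1-4\lambda}}{4\sqrt{\lambda}}\, \sin(2\pi\sqrt{\lambda})$$ has a unique solution $\lambda=\lambda_*(\alpha)$ in the interval $(0,\alpha^2)$. *)

From Stdlib Require Import Reals.
Open Scope R_scope.

Definition rhs (lam : R) : R :=
  cos (2 * PI * sqrt lam)
  - (1 - sqrt (1 - 4 * lam)) / (4 * sqrt lam) * sin (2 * PI * sqrt lam).

From Stdlib Require Import Reals Lra Ranalysis5.
Open Scope R_scope.

(* Substituting [lambda = s^2] turns the equation into [G s = cos (2 PI alpha)]
   with [G s = cos (2 PI s) - c(s) sin (2 PI s)], where the coefficient
   [c(s) = s / (1 + sqrt (1 - 4 s^2))] increases from [0] to [1/2] on [[0, 1/2]].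
   [G] decreases strictly on [[0, 0.43]] and stays below [-1] on [[0.43, 1/2)],
   while [G 0 = 1].  Since [-1 <= cos (2 PI alpha) < 1], every solution lies in
   [(0, 0.43)], where [G] is injective, and the intermediate value theorem
   provides one below [alpha]. *)

Lemma PI_bounds : 3 < PI <= 68 / 21.
Proof.
  destruct (PI_2_3_7_ineq 0) as [Hlo Hhi].
  cbn in Hlo, Hhi; unfold tg_alt, PI_2_3_7_tg, Ratan_seq in *; cbn in *.
  field_simplify in Hlo; field_simplify in Hhi; lra.
Qed.

Lemma sin_ge_cubic x : 0 <= x <= 3 -> x - x ^ 3 / 6 <= sin x.
Proof.
  intros Hx. pose proof PI_bounds.
  destruct (SIN x ltac:(lra) ltac:(lra)) as [Hlb _].
  assert (Hsin_lb : sin_lb x = x - x ^ 3 / 6 + x ^ 5 / 120 - x ^ 7 / 5040).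
  { unfold sin_lb, sin_approx; cbn [sum_f_R0]; unfold sin_term.
    rewrite !INR_IZR_INZ; cbn -[pow IZR]; field. }
  assert (x ^ 5 * x ^ 2 <= x ^ 5 * 42).
  { apply Rmult_le_compat_l; [apply pow_le|]; nra. }
  replace (x ^ 7) with (x ^ 5 * x ^ 2) in Hsin_lb by ring.
  lra.
Qed.

Lemma cos_ge_1_sub_sqr_half z : 0 <= z <= PI -> 1 - z ^ 2 / 2 <= cos z.
Proof.
  intros Hz.
  replace z with (2 * (z / 2)) at 2 by field; rewrite cos_2a_sin.
  assert (0 <= sin (z / 2)) by (apply sin_ge_0; lra).
  assert (sin (z / 2) <= z / 2).
  { destruct (Req_dec z 0) as [->|Hz0].
    - replace (0 / 2) with 0 by field; rewrite sin_0; lra.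
    - left; apply sin_lt_x; lra. }
  nra.
Qed.

(* The coefficient of [sin] in [rhs (s^2)], rationalised to
   [(1 - sqrt (1 - 4 s^2)) / (4 s) = s / (1 + sqrt (1 - 4 s^2))] so that it is
   also meaningful (and continuous) at [s = 0]. *)
Definition coef (s : R) : R := s / (1 + sqrt (1 - 4 * s ^ 2)).

Definition G (s : R) : R := cos (2 * PI * s) - coef s * sin (2 * PI * s).

Lemma rhs_sqr s : 0 < s < 1 / 2 -> rhs (s ^ 2) = G s.
Proof.
  intros Hs. unfold rhs, G, coef.
  rewrite sqrt_pow2 by lra.
  assert (0 <= sqrt (1 - 4 * s ^ 2)) by apply sqrt_pos.
  assert (sqrt (1 - 4 * s ^ 2) * sqrt (1 - 4 * s ^ 2) = 1 - 4 * s ^ 2)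
    by (apply sqrt_sqrt; nra).
  replace ((1 - sqrt (1 - 4 * s ^ 2)) / (4 * s))
    with (s / (1 + sqrt (1 - 4 * s ^ 2))); [reflexivity|].
  field_simplify_eq; lra.
Qed.

Lemma coef_gt0 s : 0 < s -> 0 < coef s.
Proof.
  intros Hs. pose proof (sqrt_pos (1 - 4 * s ^ 2)).
  apply Rdiv_lt_0_compat; lra.
Qed.

Lemma coef_lt s u : 0 <= s < u -> u <= 1 / 2 -> coef s < coef u.
Proof.
  intros Hs Hu. unfold coef.
  assert (sqrt (1 - 4 * u ^ 2) <= sqrt (1 - 4 * s ^ 2))
    by (apply sqrt_le_1_alt; nra).
  pose proof (sqrt_pos (1 - 4 * u ^ 2)).
  apply (Rlt_le_trans _ (u / (1 + sqrt (1 - 4 * s ^ 2)))).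
  - apply Rmult_lt_compat_r; [apply Rinv_0_lt_compat|]; lra.
  - apply Rmult_le_compat_l; [|apply Rinv_le_contravar]; lra.
Qed.

Lemma coef_le s u : 0 <= s <= u -> u <= 1 / 2 -> coef s <= coef u.
Proof.
  intros Hs Hu. destruct (Req_dec s u) as [->|Hsu]; [lra|].
  left; apply coef_lt; lra.
Qed.

Lemma coef_43 : 28 / 100 <= coef (43 / 100) <= 29 / 100.
Proof.
  unfold coef. set (r := sqrt _).
  assert (r * r = 1 - 4 * (43 / 100) ^ 2) by (apply sqrt_sqrt; lra).
  assert (0 <= r) by apply sqrt_pos.
  assert (51 / 100 <= r <= 52 / 100) by nra.
  assert (43 / 100 / (1 + r) * (1 + r) = 43 / 100) by (field; lra).
  set (q := 43 / 100 / (1 + r)) in *. nra.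
Qed.

Lemma G_lt_m1 s : 43 / 100 <= s < 1 / 2 -> G s < -1.
Proof.
  intros Hs. pose proof PI_bounds.
  set (z := PI * (1 / 2 - s)).
  assert (0 < z <= 227 / 1000) by (unfold z; nra).
  pose proof coef_43.
  pose proof (coef_le (43 / 100) s ltac:(lra) ltac:(lra)).
  unfold G. replace (2 * PI * s) with (PI - 2 * z) by (unfold z; field).
  rewrite Rtrigo_facts.cos_pi_minus, sin_PI_x, cos_2a_sin, sin_2a.
  assert (0 < sin z) by (apply sin_gt_0; lra).
  assert (sin z < z) by (apply sin_lt_x; lra).
  pose proof (cos_ge_1_sub_sqr_half z ltac:(lra)).
  assert (97 / 100 <= cos z) by nra.
  assert (sin z < coef s * cos z) by nra.
  nra.
Qed.

Lemma sin_add_mul_cos_ge0 m c :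
  0 < m <= 86 / 100 * PI -> 0 <= c <= 29 / 100 -> 0 <= sin m + c * cos m.
Proof.
  intros Hm Hc. pose proof PI_bounds.
  destruct (Rle_lt_dec 0 (cos m)) as [Hcos|Hcos].
  - assert (0 <= sin m) by (apply sin_ge_0; lra). nra.
  - assert (PI / 2 < m).
    { destruct (Rle_lt_dec m (PI / 2)); [|lra].
      assert (0 <= cos m) by (apply cos_ge_0; lra). lra. }
    assert (sin (42 / 100) <= sin (PI - m)) by (apply sin_incr_1; lra).
    pose proof (sin_ge_cubic (42 / 100) ltac:(lra)).
    rewrite sin_PI_x in *.
    pose proof (COS_bound m). nra.
Qed.

Lemma G_decreasing s u : 0 <= s < u -> u <= 43 / 100 -> G u < G s.
Proof.
  intros Hs Hu. pose proof PI_bounds.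
  assert (coef s < coef u) by (apply coef_lt; lra).
  assert (0 <= coef s <= 29 / 100).
  { pose proof coef_43. pose proof (coef_le u (43 / 100) ltac:(lra) ltac:(lra)).
    destruct (Req_dec s 0) as [->|]; [unfold coef; lra|].
    pose proof (coef_gt0 s); lra. }
  unfold G.
  set (p := 2 * PI * s); set (q := 2 * PI * u).
  set (d := (q - p) / 2); set (m := (p + q) / 2).
  (* [G s - G u = 2 sin d (sin m + coef s cos m) + (coef u - coef s) sin q] *)
  assert (cos p - cos q = 2 * sin d * sin m).
  { rewrite form2; replace ((p - q) / 2) with (- d) by (unfold d; field).
    rewrite sin_neg; fold m; ring. }
  assert (sin p - sin q = - 2 * cos m * sin d).
  { rewrite form4; replace ((p - q) / 2) with (- d) by (unfold d; field).
    rewrite sin_neg; fold m; ring. }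
  assert (0 < sin d) by (apply sin_gt_0; unfold d, p, q; nra).
  assert (0 < sin q) by (apply sin_gt_0; unfold q; nra).
  assert (0 <= sin m + coef s * cos m)
    by (apply sin_add_mul_cos_ge0; unfold m, p, q; nra).
  nra.
Qed.

Lemma G_0 : G 0 = 1.
Proof. unfold G. rewrite Rmult_0_r, cos_0, sin_0. ring. Qed.

Lemma G_continuity_pt s : -1 / 2 < s < 1 / 2 -> continuity_pt G s.
Proof.
  intros Hs. unfold G, coef. reg.
  - nra.
  - pose proof (sqrt_pos (1 - 4 * s ^ 2)); lra.
Qed.

Lemma G_inj_ge_m1 s u :
  0 <= s < 1 / 2 -> 0 <= u < 1 / 2 -> -1 <= G s -> G s = G u -> s = u.
Proof.
  intros Hs Hu Hm1 Hsu.
  assert (s < 43 / 100) by (destruct (Rlt_le_dec s (43 / 100));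
    [|pose proof (G_lt_m1 s ltac:(lra))]; lra).
  assert (u < 43 / 100) by (destruct (Rlt_le_dec u (43 / 100));
    [|pose proof (G_lt_m1 u ltac:(lra))]; lra).
  destruct (Rtotal_order s u) as [Hlt|[Heq|Hgt]]; [|exact Heq|].
  - pose proof (G_decreasing s u ltac:(lra) ltac:(lra)); lra.
  - pose proof (G_decreasing u s ltac:(lra) ltac:(lra)); lra.
Qed.

Lemma G_IVT b t : 0 < b < 1 / 2 -> G b < t < 1 -> exists s, 0 < s < b /\ G s = t.
Proof.
  intros Hb Ht.
  destruct (IVT_interv (fun s => t - G s) 0 b) as [s [Hs HGs]].
  - intros y Hy. apply continuity_pt_minus.
    + apply continuity_pt_const; intros ??; reflexivity.
    + apply G_continuity_pt; lra.
  - lra.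
  - rewrite G_0; lra.
  - lra.
  - exists s. assert (s <> 0) by (intros ->; rewrite G_0 in HGs; lra).
    assert (s <> b) by (intros ->; lra).
    split; lra.
Qed.

Lemma G_lt_cos alpha : 0 < alpha < 1 / 2 -> G alpha < cos (2 * PI * alpha).
Proof.
  intros Ha. pose proof PI_bounds. unfold G.
  assert (0 < coef alpha) by (apply coef_gt0; lra).
  assert (0 < sin (2 * PI * alpha)) by (apply sin_gt_0; nra).
  nra.
Qed.

Lemma G_eq_cos_unique alpha :
  0 < alpha <= 1 / 2 -> exists! s, 0 < s < alpha /\ G s = cos (2 * PI * alpha).
Proof.
  intros Ha. pose proof PI_bounds.
  assert (cos (2 * PI * alpha) < 1).
  { replace (2 * PI * alpha) with (2 * (PI * alpha)) by ring.
    rewrite cos_2a_sin.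
    assert (0 < sin (PI * alpha)) by (apply sin_gt_0; nra). nra. }
  assert (-1 <= cos (2 * PI * alpha)) by apply COS_bound.
  assert (Hb : exists b, 0 < b <= alpha /\ b < 1 / 2 /\ G b < cos (2 * PI * alpha)).
  { destruct (Rlt_le_dec alpha (1 / 2)).
    - exists alpha; pose proof (G_lt_cos alpha ltac:(lra)); lra.
    - exists (43 / 100); pose proof (G_lt_m1 (43 / 100) ltac:(lra)); lra. }
  destruct Hb as [b [Hb [Hb2 HGb]]].
  destruct (G_IVT b (cos (2 * PI * alpha))) as [s [Hs HGs]]; [lra|lra|].
  exists s; split; [split; lra|].
  intros u [Hu HGu]. apply G_inj_ge_m1; lra.
Qed.

Theorem lemma4p1 (alpha : R) (Ha0 : 0 < alpha) (Ha1 : alpha <= 1 / 2) :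
  exists! lam : R, 0 < lam < alpha ^ 2 /\ cos (2 * PI * alpha) = rhs lam.
Proof.
  destruct (G_eq_cos_unique alpha) as [s [[Hs HGs] Huniq]]; [lra|].
  exists (s ^ 2); split.
  - split; [split; nra|]. rewrite rhs_sqr; lra.
  - intros lam [[Hlam0 Hlam] Heq].
    assert (Hsq : sqrt lam ^ 2 = lam) by (apply pow2_sqrt; lra).
    assert (0 < sqrt lam) by (apply sqrt_lt_R0; lra).
    assert (sqrt lam < alpha).
    { rewrite <- (sqrt_pow2 alpha) by lra. apply sqrt_lt_1_alt; lra. }
    rewrite <- Hsq in Heq |- *. rewrite rhs_sqr in Heq by lra.
    f_equal. apply Huniq; split; lra.
Qed.
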